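(* Let $f:\mathbb{R}^n\to\mathbb{R}$ be continuously differentiable and let $g$ be the harmonic extension of $f|_{\{-1,1\}^n}$ to $[-1,1]^n$, i.e. $g(y)=\int f\,d\mu_y$ for $y\in[-1,1]^n$, where $\mu_y$ is the product probability measure on $\{-1,1\}^n$ with mean $y$. Then $$\sup_{y\in[-1,1]^n}\big(f(y)-g(y)\big)\le\kappa\, b(V),$$ where $\kappa$ is a numerical constant and $V=\nabla f([-1,1]^n)$.
   Context: $b(V)=\mathbb{E}\sup_{\xi\in V}\langle\xi,\varepsilon\rangle$ with $\varepsilon$ uniformly distributed on $\{-1,1\}^n$. *)

From HB Require Import structures.
From mathcomp Require Import all_boot all_order all_algebra.
From mathcomp Require Import all_classical all_reals all_analysis.
From mathcomp Require Import Rstruct Rstruct_topology.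
Set Implicit Arguments. Unset Strict Implicit. Unset Printing Implicit Defensive.
Import Order.TTheory GRing.Theory Num.Theory.
Import numFieldNormedType.Exports.
Local Open Scope ring_scope.
Local Open Scope classical_set_scope.

Notation RR := Rdefinitions.R.

Definition sgnb (b : bool) : RR := if b then 1 else -1.

Definition sign_pt (n : nat) (s : {ffun 'I_n -> bool}) : 'rV[RR]_n :=
  \row_i sgnb (s i).

Definition in_cube (n : nat) (y : 'rV[RR]_n) : Prop :=
  forall i, -1 <= y ord0 i <= 1.

Definition gradient (n : nat) (f : 'rV[RR]_n -> RR) (x : 'rV[RR]_n) : 'rV[RR]_n :=
  \row_(i < n) derive (f : 'rV[RR]_n -> RR^o) x (delta_mx ord0 i : 'rV[RR]_n).

Definition C1 (n : nat) (f : 'rV[RR]_n -> RR) : Prop :=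
  (forall x, differentiable (f : 'rV[RR]_n -> RR^o) x) /\ continuous (gradient f).

(* mu_y({eps}) = prod_i (1 + eps_i y_i)/2 : product probability measure on
   {-1,1}^n with mean y *)
Definition mu_weight (n : nat) (y : 'rV[RR]_n) (s : {ffun 'I_n -> bool}) : RR :=
  \prod_i ((1 + sgnb (s i) * y ord0 i) / 2).

Definition harm_ext (n : nat) (f : 'rV[RR]_n -> RR) (y : 'rV[RR]_n) : RR :=
  \sum_(s : {ffun 'I_n -> bool}) mu_weight y s * f (sign_pt s).

(* b(V) = E sup_{xi in V} <xi, eps>, eps uniform on {-1,1}^n *)
Definition bV (n : nat) (V : set 'rV[RR]_n) : RR :=
  (2 ^+ n)^-1 * \sum_(s : {ffun 'I_n -> bool})
     sup [set (\sum_i xi ord0 i * sgnb (s i)) | xi in V].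

Definition grad_image (n : nat) (f : 'rV[RR]_n -> RR) : set 'rV[RR]_n :=
  gradient f @` [set y | in_cube y].

From HB Require Import structures.
From mathcomp Require Import all_boot all_order all_algebra.
From mathcomp Require Import all_classical all_reals all_analysis.
From mathcomp Require Import Rstruct Rstruct_topology.
From mathcomp Require Import lra.
Import Order.TTheory GRing.Theory Num.Theory.
Import numFieldNormedType.Exports.
Set Implicit Arguments.
Local Open Scope ring_scope.

(* Write f(y) - g(y) = E_(s ~ mu_y) [f(y) - f(s)].  By the mean value theorem
   f(y) - f(s) = <xi, y - s> for some xi in V, and w = (y - s)/2 lies in the
   cube, so <xi, w> = E_(sg ~ mu_w) <xi, sg> <= E_(sg ~ mu_w) sup_V <., sg>.
   Drawing s ~ mu_y and then sg ~ mu_((y - s)/2) produces a uniform sg, hence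
   f(y) - g(y) <= 2 b(V): one can take kappa = 2. *)

Section ProductWeights.
Variable n : nat.
Implicit Types (w y e xi : 'rV[RR]_n) (s sg : {ffun 'I_n -> bool}).

Lemma sum_ffun_bool_prod (F : 'I_n -> bool -> RR) :
  \sum_(s : {ffun 'I_n -> bool}) \prod_i F i (s i) = \prod_i (F i true + F i false).
Proof. by rewrite -bigA_distr_bigA /=; apply: eq_bigr => i _; rewrite big_bool. Qed.

Lemma sum_mu_weight w : \sum_s mu_weight w s = 1.
Proof.
rewrite (sum_ffun_bool_prod (fun i b => (1 + sgnb b * w ord0 i) / 2)).
by apply: big1 => i _; rewrite /sgnb; lra.
Qed.

Lemma mu_weight_ge0 w s : in_cube w -> 0 <= mu_weight w s.
Proof.
move=> hw; apply: prodr_ge0 => i _.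
by have := hw i; rewrite /sgnb; case: (s i) => /andP[? ?]; lra.
Qed.

Lemma sum_mu_weight_sgnb w j : \sum_s mu_weight w s * sgnb (s j) = w ord0 j.
Proof.
pose F i b := (1 + sgnb b * w ord0 i) / 2 * (if i == j then sgnb b else 1).
transitivity (\sum_(s : {ffun 'I_n -> bool}) \prod_i F i (s i)).
  apply: eq_bigr => s _; rewrite big_split /=; congr (_ * _).
  by rewrite -big_mkcond /= big_pred1_eq.
rewrite sum_ffun_bool_prod (bigD1 j) //= big1 ?mulr1 /F ?eqxx.
  by rewrite /sgnb; lra.
by move=> i /negPf ->; rewrite /sgnb; lra.
Qed.

Lemma dot_mu_weight_mean xi w :
  \sum_i xi ord0 i * w ord0 i =
  \sum_s mu_weight w s * \sum_i xi ord0 i * sgnb (s i).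
Proof.
under [RHS]eq_bigr do rewrite mulr_sumr.
rewrite exchange_big /=; apply: eq_bigr => i _.
rewrite -(sum_mu_weight_sgnb w i) mulr_sumr.
by apply: eq_bigr => s _; rewrite mulrCA.
Qed.

Lemma dot_le_mu_weight xi w (M : {ffun 'I_n -> bool} -> RR) :
  in_cube w -> (forall sg, \sum_i xi ord0 i * sgnb (sg i) <= M sg) ->
  \sum_i xi ord0 i * w ord0 i <= \sum_sg mu_weight w sg * M sg.
Proof.
move=> hw hM; rewrite dot_mu_weight_mean; apply: ler_sum => sg _.
by apply: ler_wpM2l; [exact: mu_weight_ge0 | exact: hM].
Qed.

Lemma half_diff_in_cube y e : in_cube y -> in_cube e -> in_cube (2^-1 *: (y - e)).
Proof.
move=> hy he i; rewrite !mxE.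
by move: (hy i) (he i) => /andP[? ?] /andP[? ?]; apply/andP; split; lra.
Qed.

Lemma sign_pt_in_cube s : in_cube (sign_pt s).
Proof. by move=> i; rewrite mxE /sgnb; case: (s i); apply/andP; split; lra. Qed.

(* Coordinatewise, the terms in [y] cancel after summing over the two signs. *)
Lemma sum_mu_weight_half_diff y sg :
  \sum_s mu_weight y s * mu_weight (2^-1 *: (y - sign_pt s)) sg = (2 ^+ n)^-1.
Proof.
pose F i b := (1 + sgnb b * y ord0 i) / 2 *
              ((1 + sgnb (sg i) * (2^-1 * (y ord0 i - sgnb b))) / 2).
transitivity (\sum_(s : {ffun 'I_n -> bool}) \prod_i F i (s i)).
  apply: eq_bigr => s _; rewrite -big_split /=.
  by apply: eq_bigr => i _; rewrite !mxE.
rewrite sum_ffun_bool_prod (eq_bigr (fun _ => 2^-1)).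
  by rewrite prodr_const card_ord exprVn.
by move=> i _; rewrite /F /sgnb; case: (sg i); lra.
Qed.

Lemma sum_mu_weight_mixture y (M : {ffun 'I_n -> bool} -> RR) :
  \sum_s mu_weight y s * \sum_sg mu_weight (2^-1 *: (y - sign_pt s)) sg * M sg =
  (2 ^+ n)^-1 * \sum_sg M sg.
Proof.
under eq_bigr do rewrite mulr_sumr.
rewrite exchange_big mulr_sumr /=; apply: eq_bigr => sg _.
rewrite -(sum_mu_weight_half_diff y sg) mulr_suml.
by apply: eq_bigr => s _; rewrite mulrA.
Qed.

Lemma sub_harm_ext (f : 'rV[RR]_n -> RR) y :
  f y - harm_ext f y = \sum_s mu_weight y s * (f y - f (sign_pt s)).
Proof.
rewrite /harm_ext -{1}(mulr1 (f y)) -(sum_mu_weight y) mulr_sumr -sumrB.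
by apply: eq_bigr => s _; rewrite mulrBr mulrC.
Qed.

End ProductWeights.

Local Open Scope classical_set_scope.

Section Gradient.
Variable n : nat.
Implicit Types (x y z v : 'rV[RR]_n) (f : 'rV[RR]_n -> RR).

Lemma continuous_dot (c : 'I_n -> RR) :
  continuous (fun xi : 'rV[RR]_n => \sum_i xi ord0 i * c i).
Proof.
apply: (@continuous_big RR 'I_n +%R 0 (fun _ => true)
  (pseudometric_normed_Zmodule.add_continuous (V := RR^o))) => i _ x.
by apply: continuousM; [exact: coord_continuous | exact: cst_continuous].
Qed.

Lemma has_sup_dot_compact (K : set 'rV[RR]_n) (c : 'I_n -> RR) :
  compact K -> K !=set0 -> has_sup [set \sum_i xi ord0 i * c i | xi in K].
Proof.
move=> cK [x0 Kx0]; apply: compact_has_sup; first by exists (\sum_i x0 ord0 i * c i), x0.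
apply: continuous_compact => //.
by apply: continuous_subspaceT => x; exact: continuous_dot.
Qed.

Lemma cube_compact : compact [set y : 'rV[RR]_n | in_cube y].
Proof.
have := @rV_compact RR n (fun _ => `[(-1:RR), 1]) (fun _ => @segment_compact _ _ _).
by congr compact; apply/seteqP; split => y /= h i; have := h i; rewrite /= in_itv.
Qed.

Lemma grad_image_compact f : continuous (gradient f) -> compact (grad_image f).
Proof.
move=> gf; apply: continuous_compact; last exact: cube_compact.
by apply: continuous_subspaceT => x; exact: gf.
Qed.

Lemma grad_image_neq0 f : grad_image f !=set0.
Proof. by exists (gradient f 0), 0 => // i; rewrite mxE; lra. Qed.

Lemma segment_in_cube x y (c : RR) : in_cube x -> in_cube y -> 0 <= c <= 1 ->
  in_cube (c *: (y - x) + x).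
Proof.
move=> hx hy /andP[c0 c1] i; rewrite !mxE.
by move: (hx i) (hy i) => /andP[? ?] /andP[? ?]; apply/andP; split; nra.
Qed.

Lemma derive_line (f : 'rV[RR]_n -> RR^o) x v (t : RR) :
  derivable f (t *: v + x) v ->
  derivable ((fun s : RR => f (s *: v + x)) : RR^o -> RR^o) t 1 /\
  derive ((fun s : RR => f (s *: v + x)) : RR^o -> RR^o) t 1 = derive f (t *: v + x) v.
Proof.
pose h s := f (s *: v + x).
have E : (fun k : RR => k^-1 *: (((h : RR^o -> RR^o) \o shift t) (k *: (1:RR^o)) - h t)) =
          (fun k : RR => k^-1 *: ((f \o shift (t *: v + x)) (k *: v) - f (t *: v + x))).
  by apply: funext => k /=; rewrite /h scalerDl [k *: (1:RR^o)]mulr1 addrA.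
by rewrite /derivable /derive E.
Qed.

Lemma derive_gradient f z v : differentiable (f : 'rV[RR]_n -> RR^o) z ->
  derive (f : 'rV[RR]_n -> RR^o) z v = \sum_i gradient f z ord0 i * v ord0 i.
Proof.
move=> hd; rewrite deriveE // {1}(row_sum_delta v) linear_sum.
by apply: eq_bigr => i _; rewrite linearZ /= /gradient mxE deriveE // mulrC.
Qed.

Lemma mean_value_gradient f x y :
  (forall z, differentiable (f : 'rV[RR]_n -> RR^o) z) ->
  exists2 c : RR, 0 <= c <= 1 &
    f y - f x = \sum_i gradient f (c *: (y - x) + x) ord0 i * (y ord0 i - x ord0 i).
Proof.
move=> df; pose v := y - x; pose h s := (f : 'rV[RR]_n -> RR^o) (s *: v + x).
have hline t := derive_line (diff_derivable (df (t *: v + x))).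
have hderiv t : is_derive (t : RR^o) (1 : RR^o) (h : RR^o -> RR^o)
    (derive (f : 'rV[RR]_n -> RR^o) (t *: v + x) v).
  by have [dh <-] := hline t; exact: derivableP.
have hcont : {within `[(0:RR), 1], continuous h}.
  by apply: derivable_within_continuous => t _; exact: (hline t).1.
have [c c01] := @MVT_segment RR h (fun t => derive (f : 'rV[RR]_n -> RR^o) (t *: v + x) v)
  0 1 ler01 (fun t _ => hderiv t) hcont.
rewrite /h scale1r scale0r add0r subr0 mulr1 /v subrK => ->.
exists c; first by move: c01; rewrite in_itv.
by rewrite derive_gradient //; apply: eq_bigr => i _; rewrite !mxE.
Qed.

Lemma sub_le_mu_weight f x y (M : {ffun 'I_n -> bool} -> RR) :
  (forall z, differentiable (f : 'rV[RR]_n -> RR^o) z) -> in_cube x -> in_cube y ->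
  (forall xi (sg : {ffun 'I_n -> bool}), grad_image f xi -> \sum_i xi ord0 i * sgnb (sg i) <= M sg) ->
  f y - f x <= 2 * \sum_sg mu_weight (2^-1 *: (y - x)) sg * M sg.
Proof.
move=> df hx hy le_M; have [c c01 ->] := mean_value_gradient x y df.
set xi := gradient f _.
have Vxi : grad_image f xi by exists (c *: (y - x) + x); first exact: segment_in_cube.
have -> : \sum_i xi ord0 i * (y ord0 i - x ord0 i) =
          2 * \sum_i xi ord0 i * (2^-1 *: (y - x)) ord0 i.
  by rewrite mulr_sumr; apply: eq_bigr => i _; rewrite !mxE; lra.
rewrite ler_pM2l //; apply: dot_le_mu_weight => [|sg]; last exact: le_M.
exact: half_diff_in_cube.
Qed.

End Gradient.

Theorem lemma4p2 : exists kappa : RR, forall (n : nat) (f : 'rV[RR]_n -> RR),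
  C1 f ->
  forall y : 'rV[RR]_n, in_cube y ->
    f y - harm_ext f y <= kappa * bV (grad_image f).
Proof.
exists 2 => n f [df gf] y hy.
pose M sg := sup [set (\sum_i xi ord0 i * sgnb (sg i)) | xi in grad_image f].
have le_M xi sg : grad_image f xi ->
    \sum_i xi ord0 i * sgnb (sg i) <= M sg.
  move=> Vxi; apply: sup_upper_bound; last by exists xi.
  exact: has_sup_dot_compact (grad_image_compact gf) (grad_image_neq0 f).
rewrite sub_harm_ext /bV -(sum_mu_weight_mixture y M) mulr_sumr ler_sum // => s _.
rewrite mulrCA ler_wpM2l ?mu_weight_ge0 //.
exact: sub_le_mu_weight (sign_pt_in_cube s) hy le_M.
Qed.
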